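(* Consider the second-order chemical equilibrium reaction $A + B \leftrightarrow 2C$ with equilibrium constant $K_e = [C]^2/([A][B])$, and let $X = V(K_e xy - z^2)\subset\mathbb{P}^2$, where $x,y,z$ are the coordinates corresponding to the normalized concentrations $[A]/c,[B]/c,[C]/c$ with $c=[A]+[B]+[C]>0$. Then the ML degree of $X$ is $1$ if $K_e=4$, $0$ if $K_e=0$, and $2$ for all other values of $K_e$.
   Context: Let $\mathcal{H}=\{p\in\mathbb{P}^n : p_0p_1\cdots p_n(p_0+\dots+p_n)=0\}$. For data $u=(u_0,\dots,u_n)\in\mathbb{N}^{n+1}$ let $\mathcal{L}_u = \frac{p_0^{u_0}\cdots p_n^{u_n}}{(p_0+\dots+p_n)^{u_0+\dots+u_n}}$. The maximum likelihood (ML) degree of a projective variety $X\subset\mathbb{P}^n$ is the number of complex critical points of $\mathcal{L}_u$ on $X_{\mathrm{reg}}\setminus\mathcal{H}$ for (generic) $u$, where $X_{\mathrm{reg}}$ is the set of smooth points of $X$. *)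

From HB Require Import structures.
From mathcomp Require Import all_boot all_order all_algebra.
From mathcomp Require Import mpoly.
Set Implicit Arguments. Unset Strict Implicit. Unset Printing Implicit Defensive.
Import Order.TTheory GRing.Theory Num.Theory.
Local Open Scope ring_scope.

(* Points of P^n are represented by nonzero vectors p : 'I_n.+1 -> C
   (homogeneous coordinates p_0,...,p_n), counted up to nonzero scaling. *)
Section MLdegree.
Variables (C : numClosedFieldType) (n : nat).

Definition hpoint := 'I_n.+1 -> C.

Definition vanishes_on (f g : {mpoly C[n.+1]}) : Prop :=
  forall p : hpoint, f.@[p] = 0 -> g.@[p] = 0.

Definition in_H (p : hpoint) : Prop :=
  (\prod_(i < n.+1) p i) * (\sum_(i < n.+1) p i) = 0.

Definition nonzero_pt (p : hpoint) : Prop := exists i, p i != 0.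

(* Jacobian criterion for the (reduced) hypersurface X = V(f):  X has
   codimension 1, so p in X is a smooth point iff some polynomial of the
   vanishing ideal I(X) has nonzero gradient at p. *)
Definition smooth_pt (f : {mpoly C[n.+1]}) (p : hpoint) : Prop :=
  [/\ nonzero_pt p, f.@[p] = 0 &
      exists g, vanishes_on f g /\ exists i, (mderiv i g).@[p] != 0].

(* Critical point of L_u = prod p_i^{u_i} / (sum p_i)^{|u|} on X_reg \ H:
   the differential of log L_u, (u_i/p_i - |u|/(sum_j p_j))_i, vanishes on the
   tangent space of (the cone over) X at p, i.e. on the common kernel of the
   gradients at p of all polynomials in I(X). *)
Definition ml_critical (f : {mpoly C[n.+1]}) (u : 'I_n.+1 -> nat) (p : hpoint)
  : Prop :=
  [/\ smooth_pt f p, ~ in_H p &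
      forall v : hpoint,
        (forall g, vanishes_on f g ->
           \sum_(i < n.+1) (mderiv i g).@[p] * v i = 0) ->
        \sum_(i < n.+1)
           ((u i)%:R / p i - (\sum_(j < n.+1) u j)%N%:R / (\sum_(j < n.+1) p j))
           * v i = 0].

Definition proj_eq (p q : hpoint) : Prop :=
  exists c : C, c != 0 /\ forall i, q i = c * p i.

Definition num_critical (f : {mpoly C[n.+1]}) (u : 'I_n.+1 -> nat) (d : nat)
  : Prop :=
  exists s : seq hpoint,
    [/\ size s = d,
        (forall k, (k < d)%N -> ml_critical f u (nth (fun=> 0) s k)),
        (forall i j, (i < d)%N -> (j < d)%N -> i <> j ->
           ~ proj_eq (nth (fun=> 0) s i) (nth (fun=> 0) s j)) &
        (forall p, ml_critical f u p ->
           exists2 k, (k < d)%N & proj_eq (nth (fun=> 0) s k) p)].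

(* The ML degree of X = V(f) equals d: for generic data u in N^{n+1}, i.e.
   for all u outside the zero set of some nonzero polynomial g, L_u has
   exactly d critical points on X_reg \ H. *)
Definition ML_degree_is (f : {mpoly C[n.+1]}) (d : nat) : Prop :=
  exists g : {mpoly C[n.+1]}, g != 0 /\
    forall u : 'I_n.+1 -> nat, g.@[fun i => (u i)%:R] != 0 -> num_critical f u d.

End MLdegree.

(* The conic K_e x y - z^2 in P^2, coordinates x = p_0, y = p_1, z = p_2. *)
Definition chem_conic (C : numClosedFieldType) (Ke : C) : {mpoly C[3]} :=
  Ke *: ('X_(0 : 'I_3) * 'X_(1 : 'I_3)) - 'X_(2 : 'I_3) ^+ 2.

(* A point p of X off H is critical iff the gradient of log L_u kills the
   tangent plane of X at p.  That plane is spanned by p (Euler) and by the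
   velocity (2 p_0, 0, p_2) of the curve ((1+t)^2 p_0, p_1, (1+t) p_2) on X, so
   the critical points are the points of X off H satisfying one extra linear
   equation.  Setting p = (z^2/Ke : 1 : z) turns that equation into a quadratic
   Q_u(z), and p lies off H iff z != 0 and R(z) = z^2 + Ke z + Ke != 0.  For
   generic u, Q_u has two distinct nonzero roots, and a common root of Q_u and
   R forces z = -2 and Ke = 4; conversely -2 is a root of Q_u when Ke = 4.  For
   Ke = 0, X = V(z^2) lies inside H. *)

From HB Require Import structures.
From mathcomp Require Import all_boot all_order all_algebra.
From mathcomp Require Import mpoly.
From mathcomp Require Import ring.
Import Order.TTheory GRing.Theory Num.Theory.
Local Open Scope ring_scope.

Lemma sum_ord3 (V : nmodType) (F : 'I_3 -> V) : \sum_(i < 3) F i = F 0 + F 1 + F 2.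
Proof.
by rewrite !big_ord_recl big_ord0 addr0 addrA; congr (F _ + F _ + F _); apply/val_inj.
Qed.

Lemma prod_ord3 (R : comPzSemiRingType) (F : 'I_3 -> R) :
  \prod_(i < 3) F i = F 0 * F 1 * F 2.
Proof.
by rewrite !big_ord_recl big_ord0 mulr1 mulrA; congr (F _ * F _ * F _); apply/val_inj.
Qed.

Lemma forall_ord3 (P : 'I_3 -> Prop) : P 0 -> P 1 -> P 2 -> forall i, P i.
Proof.
move=> P0 P1 P2 [[|[|[|k]]] lt_k3] //.
- by rewrite (_ : Ordinal lt_k3 = 0) //; apply/val_inj.
- by rewrite (_ : Ordinal lt_k3 = 1) //; apply/val_inj.
- by rewrite (_ : Ordinal lt_k3 = 2) //; apply/val_inj.
Qed.

Definition vec3 {T : Type} (a b c : T) (i : 'I_3) : T :=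
  match val i with 0 => a | 1 => b | _ => c end.

Section TangentCurve.
Variables (R : numDomainType) (n : nat).
Implicit Types (p : {mpoly R[n]}) (gam : 'I_n -> {poly R}).

Lemma mderivXU (i j : 'I_n) : ('X_i : {mpoly R[n]})^`M(j) = (i == j)%:R%:MP.
Proof.
rewrite mderivX mnm1E; case: eqP => [->|_]; last by rewrite scale0r mpolyC0.
rewrite (_ : (U_(j) - U_(j) = 0)%MM) ?mpolyX0 ?scale1r ?mpolyC1 //.
by apply/mnmP => k; rewrite mnmBE subnn mnm0E.
Qed.

Lemma mpoly_ring_ind (P : {mpoly R[n]} -> Prop) :
  (forall c, P c%:MP) -> (forall i, P 'X_i) ->
  (forall p q, P p -> P q -> P (p + q)) -> (forall p q, P p -> P q -> P (p * q)) ->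
  forall p, P p.
Proof.
move=> PC PX PD PM; apply: mpolyind => [|c m p _ _ Pp]; first by rewrite -mpolyC0.
apply: (PD) => //; rewrite -mul_mpolyC; apply: (PM) => //.
rewrite mpolyXE_id; apply: (big_ind P) => [||i _]; [by rewrite -mpolyC1 | exact: PM |].
elim: (m i) => [|k Pk]; first by rewrite expr0 -mpolyC1.
by rewrite exprS; apply: (PM).
Qed.

Lemma horner_mmap_polyC gam p t :
  (mmap (@polyC R) gam p).[t] = p.@[fun i => (gam i).[t]].
Proof.
elim/mpoly_ring_ind: p => [c|i|p q IHp IHq|p q IHp IHq].
- by rewrite mmapC hornerC mevalC.
- by rewrite mmapX mmap1U mevalXU.
- by rewrite mmapD hornerD mevalD IHp IHq.
- by rewrite rmorphM hornerM mevalM IHp IHq.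
Qed.

Lemma deriv_mmap_polyC gam p :
  (mmap (@polyC R) gam p)^`() = \sum_i mmap (@polyC R) gam p^`M(i) * (gam i)^`().
Proof.
elim/mpoly_ring_ind: p => [c|i|p q IHp IHq|p q IHp IHq].
- rewrite mmapC derivC big1 // => i _; by rewrite mderivC mmap0 mul0r.
- rewrite mmapX mmap1U (bigD1 i) //= mderivXU eqxx mmapC mul1r big1 ?addr0 // => j.
  by move=> /negPf ne_ji; rewrite mderivXU eq_sym ne_ji mmapC mul0r.
- rewrite mmapD derivD IHp IHq -big_split /=.
  by apply: eq_bigr => i _; rewrite mderivD mmapD mulrDl.
- rewrite rmorphM derivM IHp IHq mulr_suml mulr_sumr -big_split /=.
  by apply: eq_bigr => i _; rewrite mderivM mmapD !rmorphM; ring.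
Qed.

Lemma poly_natr_roots_eq0 (q : {poly R}) : (forall k : nat, q.[k%:R] = 0) -> q = 0.
Proof.
move=> q_nat; apply: (@roots_geq_poly_eq0 _ _ [seq k%:R | k <- iota 0 (size q)]).
- by apply/allP => _ /mapP[k _ ->]; apply/rootP.
- by rewrite map_inj_uniq ?iota_uniq // => i j /eqP; rewrite eqr_nat => /eqP.
- by rewrite size_map size_iota.
Qed.

Lemma mderiv_along_curve p gam :
  (forall t, p.@[fun i => (gam i).[t]] = 0) ->
  \sum_i p^`M(i).@[fun i => (gam i).[0]] * (gam i)^`().[0] = 0.
Proof.
move=> p_gam.
have gam_p0 : mmap (@polyC R) gam p = 0.
  by apply: poly_natr_roots_eq0 => k; rewrite horner_mmap_polyC p_gam.
have := congr1 (horner^~ 0) (deriv_mmap_polyC gam p).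
rewrite /= gam_p0 deriv0 horner0 horner_sum => sum_eq0.
rewrite [RHS]sum_eq0.
by apply: eq_bigr => i _; rewrite hornerM horner_mmap_polyC.
Qed.

End TangentCurve.

Definition quad_root {F : fieldType} (a b d : F) : F := (- b + d) / (2 * a).

Section QuadraticRoots.
Variables (F : fieldType) (a b c d : F).
Hypotheses (a_neq0 : a != 0) (two_neq0 : (2 : F) != 0).

Lemma quad_factor z : d ^+ 2 = b ^+ 2 - 4 * a * c ->
  a * z ^+ 2 + b * z + c = a * (z - quad_root a b d) * (z - quad_root a b (- d)).
Proof.
move=> sqr_d; have four_neq0 : (4 : F) != 0 by rewrite (_ : 4 = 2 * 2) ?mulf_neq0 //; ring.
transitivity (a * (z - quad_root a b d) * (z - quad_root a b (- d))
              + (d ^+ 2 - (b ^+ 2 - 4 * a * c)) / (4 * a)).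
  by rewrite /quad_root; field; rewrite four_neq0 two_neq0 a_neq0.
by rewrite sqr_d subrr mul0r addr0.
Qed.

Lemma quad_root_neq : d != 0 -> quad_root a b d != quad_root a b (- d).
Proof.
move=> d_neq0; rewrite -subr_eq0.
have -> : quad_root a b d - quad_root a b (- d) = d / a.
  by rewrite /quad_root; field; rewrite two_neq0 a_neq0.
by rewrite mulf_neq0 ?invr_eq0.
Qed.

End QuadraticRoots.

Lemma ml_gradient_conic_orthogonal (K : fieldType) (Ke a0 a1 a2 x y z v0 v1 v2 : K) :
  x != 0 -> y != 0 -> z != 0 -> x + y + z != 0 ->
  Ke * (x * y) = z ^+ 2 ->
  (2 * a0 + a2) * (x + y + z) = (a0 + a1 + a2) * (2 * x + z) ->
  Ke * y * v0 + Ke * x * v1 + - (2 * z) * v2 = 0 ->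
  (a0 / x - (a0 + a1 + a2) / (x + y + z)) * v0
  + (a1 / y - (a0 + a1 + a2) / (x + y + z)) * v1
  + (a2 / z - (a0 + a1 + a2) / (x + y + z)) * v2 = 0.
Proof.
move=> x0 y0 z0 S0 conic_eq crit_eq v_tangent.
pose A0 := a0 / x - (a0 + a1 + a2) / (x + y + z).
(* The log-likelihood gradient is A0 x / z^2 times the gradient of the conic,
   modulo the two defining equations. *)
transitivity (A0 * x / z ^+ 2 * (Ke * y * v0 + Ke * x * v1 + - (2 * z) * v2)
  - (Ke * (x * y) - z ^+ 2) / z ^+ 2 * A0 * (v0 + x / y * v1)
  + ((2 * a0 + a2) * (x + y + z) - (a0 + a1 + a2) * (2 * x + z)) / (x + y + z)
    * (v2 / z - v1 / y)).
  by rewrite /A0; field; rewrite x0 y0 z0 S0.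
by rewrite v_tangent conic_eq crit_eq !subrr !mulr0 !mul0r subrr add0r.
Qed.

Section ConicCriticalPoints.
Context {C : numClosedFieldType} (Ke : C).
Local Notation F := (chem_conic Ke).

Lemma meval_chem_conic (p : 'I_3 -> C) : F.@[p] = Ke * (p 0 * p 1) - p 2 ^+ 2.
Proof. by rewrite /chem_conic mevalB mevalZ mevalM rmorphXn /= !mevalXU. Qed.

Lemma meval_mderiv_chem_conic (p : 'I_3 -> C) i :
  F^`M(i).@[p] = vec3 (Ke * p 1) (Ke * p 0) (- (2 * p 2)) i.
Proof.
move: i; apply: forall_ord3;
  rewrite /chem_conic mderivB mderivZ expr2 !mderivM !mderivXU /=;
  rewrite mevalB mevalZ mevalD !mevalM mevalD !mevalM !mevalC !mevalXU /vec3 /=; ring.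
Qed.

Lemma mderiv_vanishing_conic_tangent (p : 'I_3 -> C) :
  Ke * (p 0 * p 1) = p 2 ^+ 2 -> forall g, vanishes_on F g ->
  \sum_i g^`M(i).@[p] * vec3 (2 * p 0) 0 (p 2) i = 0.
Proof.
move=> Fp g g_X; pose gam := vec3 (p 0 *: (1 + 'X) ^+ 2) (p 1)%:P (p 2 *: (1 + 'X)).
have gam_at0 : (fun i => (gam i).[0]) =1 p.
  apply: forall_ord3; rewrite /gam /vec3 /=;
  by rewrite ?(hornerZ, horner_exp, hornerD, hornerX, hornerC); ring.
have gam'_at0 i : (gam i)^`().[0] = vec3 (2 * p 0) 0 (p 2) i.
  move: i; apply: forall_ord3; rewrite /gam /vec3 /=;
  rewrite ?(derivZ, deriv_exp, derivD, derivC, derivX);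
  by rewrite ?(hornerZ, hornerMn, hornerM, horner_exp, hornerD, hornerX, hornerC); ring.
rewrite -[RHS](@mderiv_along_curve _ _ g gam).
  by apply: eq_bigr => i _; rewrite gam'_at0 (meval_eq _ gam_at0).
move=> t; apply: g_X; rewrite meval_chem_conic /gam /vec3 /=.
rewrite !(hornerZ, horner_exp, hornerD, hornerX, hornerC).
transitivity ((1 + t) ^+ 2 * (Ke * (p 0 * p 1) - p 2 ^+ 2)); first by ring.
by rewrite Fp subrr mulr0.
Qed.

Definition conic_critical (u : 'I_3 -> nat) (p : 'I_3 -> C) : Prop :=
  [/\ p 0 != 0, p 1 != 0, p 2 != 0, p 0 + p 1 + p 2 != 0 &
      Ke * (p 0 * p 1) = p 2 ^+ 2 /\
      (2 * (u 0)%:R + (u 2)%:R) * (p 0 + p 1 + p 2)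
        = ((u 0)%:R + (u 1)%:R + (u 2)%:R) * (2 * p 0 + p 2)].

Lemma ml_critical_conic_eqs u p : ml_critical F u p -> conic_critical u p.
Proof.
case=> -[_ Fp _] notH ml_p; move/eqP: Fp; rewrite meval_chem_conic subr_eq0 => /eqP Fp.
have : p 0 * p 1 * p 2 * (p 0 + p 1 + p 2) != 0.
  by apply/eqP; rewrite -prod_ord3 -sum_ord3.
rewrite !mulf_eq0 !negb_or => /andP[/andP[/andP[p0 p1] p2] pS].
split => //; split => //.
have := ml_p _ (mderiv_vanishing_conic_tangent _ Fp).
rewrite !sum_ord3 !natrD /vec3 /= => ml_w.
set a0 : C := (u 0)%:R in ml_w *; set a1 : C := (u 1)%:R in ml_w *.
set a2 : C := (u 2)%:R in ml_w *; set S := p 0 + p 1 + p 2 in pS ml_w *.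
have /eqP : ((2 * a0 + a2) * S - (a0 + a1 + a2) * (2 * p 0 + p 2)) / S = 0.
  by rewrite -ml_w /S; field; rewrite p0 p1 p2 pS.
by rewrite mulf_eq0 invr_eq0 (negPf pS) orbF subr_eq0 => /eqP.
Qed.

Lemma conic_eqs_ml_critical u p : conic_critical u p -> ml_critical F u p.
Proof.
case=> p0 p1 p2 pS [Fp crit_eq]; split.
- split; [by exists 2 | by rewrite meval_chem_conic Fp subrr |].
  exists F; split => //; exists 2.
  by rewrite meval_mderiv_chem_conic /vec3 /= oppr_eq0 mulf_neq0 ?pnatr_eq0.
- by rewrite /in_H prod_ord3 sum_ord3; apply/eqP; rewrite !mulf_neq0.
move=> v v_tangent; have := v_tangent F (fun q Fq => Fq).
rewrite !sum_ord3 !meval_mderiv_chem_conic !natrD /vec3 /=.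
exact: ml_gradient_conic_orthogonal.
Qed.

Lemma ml_critical_conicE u p : ml_critical F u p <-> conic_critical u p.
Proof. by split; [apply: ml_critical_conic_eqs | apply: conic_eqs_ml_critical]. Qed.

End ConicCriticalPoints.

Section ConicParametrization.
Context {C : numClosedFieldType} (Ke : C) (u : 'I_3 -> nat).
Hypothesis Ke_neq0 : Ke != 0.
Local Notation F := (chem_conic Ke).
Local Notation a0 := ((u 0)%:R : C).
Local Notation a1 := ((u 1)%:R : C).
Local Notation a2 := ((u 2)%:R : C).

Definition conic_pt (z : C) : 'I_3 -> C := vec3 (z ^+ 2 / Ke) 1 z.

(* Ke times the sum of the coordinates of conic_pt z. *)
Definition sum_quad (z : C) : C := z ^+ 2 + Ke * z + Ke.

Definition crit_quad (z : C) : C :=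
  (2 * a1 + a2) * z ^+ 2 - Ke * (a0 - a1) * z - Ke * (2 * a0 + a2).

Lemma conic_pt_critical z :
  z != 0 -> sum_quad z != 0 -> crit_quad z = 0 -> conic_critical Ke u (conic_pt z).
Proof.
move=> z0 sum_z crit_z; rewrite /conic_critical /conic_pt /vec3 /=.
split => //; first by rewrite mulf_neq0 ?invr_eq0 ?expf_neq0.
- exact: oner_neq0.
- have -> : z ^+ 2 / Ke + 1 + z = sum_quad z / Ke by rewrite /sum_quad; field.
  by rewrite mulf_neq0 ?invr_eq0.
split; first by field.
apply/eqP; rewrite -subr_eq0; apply/eqP.
transitivity (- crit_quad z / Ke); last by rewrite crit_z oppr0 mul0r.
by rewrite /crit_quad; field.
Qed.

Lemma conic_critical_pt p : conic_critical Ke u p ->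
  [/\ p 2 / p 1 != 0, sum_quad (p 2 / p 1) != 0, crit_quad (p 2 / p 1) = 0
    & proj_eq (conic_pt (p 2 / p 1)) p].
Proof.
case=> p0 p1 p2 pS [Fp crit_eq].
have p0E : p 0 = p 2 ^+ 2 / (Ke * p 1) by rewrite -Fp; field; rewrite Ke_neq0 p1.
split.
- by rewrite mulf_neq0 ?invr_eq0.
- have -> : sum_quad (p 2 / p 1) = Ke * (p 0 + p 1 + p 2) / p 1.
    by rewrite p0E /sum_quad; field; rewrite Ke_neq0 p1.
  by rewrite !mulf_neq0 ?invr_eq0.
- transitivity (- Ke * ((2 * a0 + a2) * (p 0 + p 1 + p 2)
                        - (a0 + a1 + a2) * (2 * p 0 + p 2)) / p 1).
    by rewrite p0E /crit_quad; field; rewrite Ke_neq0 p1.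
  by rewrite crit_eq subrr mulr0 mul0r.
- exists (p 1); split => //; apply: forall_ord3; rewrite /conic_pt /vec3 /=.
  + by rewrite p0E; field; rewrite Ke_neq0 p1.
  + by rewrite mulr1.
  + by field.
Qed.

Lemma num_critical_conic_pts (zs : seq C) : uniq zs ->
  (forall z, z \in zs <-> [/\ z != 0, sum_quad z != 0 & crit_quad z = 0]) ->
  num_critical F u (size zs).
Proof.
move=> zs_uniq zsP; exists (map conic_pt zs); split.
- by rewrite size_map.
- move=> k k_lt; rewrite (nth_map 0) //; apply/ml_critical_conicE.
  by case/zsP: (mem_nth 0 k_lt) => *; apply: conic_pt_critical.
- move=> i j i_lt j_lt ne_ij; rewrite !(nth_map 0) // => -[c [_ c_eq]].
  have := c_eq 1; have := c_eq 2; rewrite /conic_pt /vec3 /= mulr1 => eq2 eq1.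
  rewrite -eq1 mul1r in eq2; apply: ne_ij; apply/eqP.
  by rewrite -(nth_uniq 0 i_lt j_lt zs_uniq) eq2.
- move=> p /ml_critical_conicE /conic_critical_pt [z0 sum_z crit_z pt_p].
  have z_zs : p 2 / p 1 \in zs by apply/zsP.
  exists (index (p 2 / p 1) zs); first by rewrite index_mem.
  by rewrite (nth_map 0) ?index_mem // nth_index.
Qed.

Definition crit_disc : C :=
  Ke ^+ 2 * (a0 - a1) ^+ 2 + 4 * Ke * ((2 * a0 + a2) * (2 * a1 + a2)).

Lemma crit_quad_root_neq0 z : 2 * a0 + a2 != 0 -> crit_quad z = 0 -> z != 0.
Proof.
move=> a02 crit_z; apply: contra_eq_neq crit_z => ->.
by rewrite /crit_quad expr0n /= !mulr0 subrr sub0r oppr_eq0 mulf_neq0.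
Qed.

Lemma crit_sum_quad_common_root z : a0 + a1 + a2 != 0 ->
  crit_quad z = 0 -> sum_quad z = 0 -> Ke = 4.
Proof.
move=> N0 crit_z sum_z.
(* Eliminating z^2 between the two quadratics. *)
have : Ke * (a0 + a1 + a2) * (z + 2) = 0.
  transitivity (- (crit_quad z - (2 * a1 + a2) * sum_quad z)).
    by rewrite /crit_quad /sum_quad; ring.
  by rewrite crit_z sum_z mulr0 subrr oppr0.
move/eqP; rewrite !mulf_eq0 (negPf Ke_neq0) (negPf N0) /= addr_eq0 => /eqP z_2.
apply/eqP; rewrite -subr_eq0 -oppr_eq0 -sum_z /sum_quad z_2; apply/eqP; ring.
Qed.

Lemma crit_quad_eq0 de z : 2 * a1 + a2 != 0 -> de ^+ 2 = crit_disc ->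
  crit_quad z = 0 <->
  z \in [:: quad_root (2 * a1 + a2) (- (Ke * (a0 - a1))) de;
            quad_root (2 * a1 + a2) (- (Ke * (a0 - a1))) (- de)].
Proof.
move=> a12 sqr_de; have two_neq0 : (2 : C) != 0 by rewrite pnatr_eq0.
have -> : crit_quad z = (2 * a1 + a2) * z ^+ 2 + - (Ke * (a0 - a1)) * z
                        + - (Ke * (2 * a0 + a2)) by rewrite /crit_quad; ring.
rewrite (@quad_factor _ _ _ _ de) //; last by rewrite sqr_de /crit_disc; ring.
rewrite -mulrA !inE; split => [/eqP | z_roots].
  by rewrite !mulf_eq0 (negPf a12) !subr_eq0.
by apply/eqP; rewrite !mulf_eq0 !subr_eq0 z_roots orbT.
Qed.

Lemma size_filter_sum_quad (rs : seq C) : uniq rs -> size rs = 2 ->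
  a0 + a1 + a2 != 0 -> (forall z, crit_quad z = 0 <-> z \in rs) ->
  size [seq z <- rs | sum_quad z != 0] = if Ke == 4 then 1%N else 2%N.
Proof.
move=> rs_uniq rs2 N0 rsP; case: ifPn => [/eqP Ke4 | Ke_neq4].
  have sum_quadE z : sum_quad z = (z + 2) ^+ 2 by rewrite /sum_quad Ke4; ring.
  have m2_rs : -2 \in rs by apply/rsP; rewrite /crit_quad Ke4; ring.
  rewrite size_filter (eq_count (a2 := predC1 (-2))) => [|z].
    have := count_predC (pred1 (-2)) rs.
    by rewrite rs2 count_uniq_mem // m2_rs => -[].
  by rewrite /= sum_quadE expf_eq0 /= addr_eq0.
rewrite (all_filterP _) ?rs2 //; apply/allP => z /rsP crit_z.
apply/eqP => sum_z; move: Ke_neq4.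
by rewrite (crit_sum_quad_common_root z N0 crit_z sum_z) eqxx.
Qed.

Lemma num_critical_generic :
  a0 + a1 + a2 != 0 -> 2 * a0 + a2 != 0 -> 2 * a1 + a2 != 0 -> crit_disc != 0 ->
  num_critical F u (if Ke == 4 then 1%N else 2%N).
Proof.
move=> N0 a02 a12 disc0; pose de := sqrtC crit_disc.
have sqr_de : de ^+ 2 = crit_disc by rewrite sqrtCK.
pose r := quad_root (2 * a1 + a2) (- (Ke * (a0 - a1))).
have rsP z : crit_quad z = 0 <-> z \in [:: r de; r (- de)].
  exact: crit_quad_eq0.
have rs_uniq : uniq [:: r de; r (- de)].
  rewrite /= inE andbT; apply: quad_root_neq => //; first by rewrite pnatr_eq0.
  by apply: contraNneq disc0 => de0; rewrite -sqr_de de0 expr0n.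
rewrite -(size_filter_sum_quad _ rs_uniq _ N0 rsP) //.
apply: num_critical_conic_pts; first exact: filter_uniq.
move=> z; rewrite mem_filter.
split=> [/andP[sum_z /rsP crit_z] | [_ sum_z /rsP z_rs]]; last by rewrite sum_z z_rs.
by split => //; apply: crit_quad_root_neq0 crit_z.
Qed.

End ConicParametrization.

Lemma num_critical_Ke0 {C : numClosedFieldType} (u : 'I_3 -> nat) :
  num_critical (chem_conic (0 : C)) u 0.
Proof.
exists [::]; split => // p /ml_critical_conicE [_ _ p2 _ [Fp _]].
have : p 2 ^+ 2 == 0 by rewrite -Fp mul0r.
by rewrite expf_eq0 /= (negPf p2).
Qed.

Definition generic_poly {C : numClosedFieldType} (Ke : C) : {mpoly C[3]} :=
  ('X_0 + 'X_1 + 'X_2) * (2 * 'X_0 + 'X_2) * (2 * 'X_1 + 'X_2)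
  * (Ke ^+ 2 *: ('X_0 - 'X_1) ^+ 2 + (4 * Ke) *: ((2 * 'X_0 + 'X_2) * (2 * 'X_1 + 'X_2))).

Lemma meval_generic_poly {C : numClosedFieldType} (Ke : C) (v : 'I_3 -> C) :
  (generic_poly Ke).@[v] =
  (v 0 + v 1 + v 2) * (2 * v 0 + v 2) * (2 * v 1 + v 2)
  * (Ke ^+ 2 * (v 0 - v 1) ^+ 2 + 4 * Ke * ((2 * v 0 + v 2) * (2 * v 1 + v 2))).
Proof.
rewrite /generic_poly !expr2.
by rewrite !(mevalM, mevalD, mevalN, mevalZ, mevalMn, meval1, mevalXU); ring.
Qed.

Lemma generic_poly_neq0 {C : numClosedFieldType} (Ke : C) : Ke != 0 -> generic_poly Ke != 0.
Proof.
move=> Ke_neq0; apply: contraNneq Ke_neq0 => g0.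
have := congr1 (meval (vec3 1 1 0)) g0; rewrite meval_generic_poly meval0 /vec3 /=.
have -> : (1 + 1 + 0) * (2 * 1 + 0) * (2 * 1 + 0)
          * (Ke ^+ 2 * (1 - 1) ^+ 2 + 4 * Ke * ((2 * 1 + 0) * (2 * 1 + 0))) = 128 * Ke :> C.
  by ring.
by move/eqP; rewrite mulf_eq0 pnatr_eq0 /= => ->.
Qed.

Theorem mainTheorem2 (C : numClosedFieldType) (Ke : C) :
  ML_degree_is (chem_conic Ke)
    (if Ke == 4 then 1%N else if Ke == 0 then 0%N else 2%N).
Proof.
have [-> | Ke_neq0] := eqVneq Ke 0.
  rewrite eq_sym pnatr_eq0 /=; exists 1; split; first exact: oner_neq0.
  by move=> u _; apply: num_critical_Ke0.
exists (generic_poly Ke); split; first exact: generic_poly_neq0.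
move=> u; rewrite meval_generic_poly !mulf_eq0 !negb_or.
by case/andP => /andP[/andP[N0 a02] a12] disc0; apply: num_critical_generic.
Qed.
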